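(* Let $|s_0\rangle=|0\rangle$, $|s_1\rangle=-\tfrac12|0\rangle-\tfrac{\sqrt3}{2}|1\rangle$, $|s_2\rangle=-\tfrac12|0\rangle+\tfrac{\sqrt3}{2}|1\rangle$ and $|\psi_i\rangle=|s_i\rangle\otimes|s_i\rangle$ for $i=0,1,2$, each with prior $1/3$. For unambiguous discrimination of this ensemble, the maximum conclusive success probability is $3/4$ over all POVMs, $1/2$ over separable POVMs, and $1/2$ over LOCC measurements (attained by an LOCC protocol).
   Context: An unambiguous-discrimination POVM for $\{|\psi_i\rangle\}_{i=0}^2$ is a POVM $\{\Pi_0,\Pi_1,\Pi_2,\Pi_?\}$ with $\langle\psi_j|\Pi_i|\psi_j\rangle=0$ for all $i\ne j$ in $\{0,1,2\}$; its conclusive success probability is $\tfrac13\sum_{i=0}^2\langle\psi_i|\Pi_i|\psi_i\rangle$. A POVM is separable if each of its elements is a nonnegative combination of product projectors $|a\rangle\langle a|\otimes|b\rangle\langle b|$. LOCC means measurements implementable by local operations on each qubit and classical communication. *)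

From HB Require Import structures.
From mathcomp Require Import all_boot all_order all_algebra.
Set Implicit Arguments. Unset Strict Implicit. Unset Printing Implicit Defensive.
Import Order.TTheory GRing.Theory Num.Theory.
Local Open Scope ring_scope.

Section QDefs.
Variable C : numClosedFieldType.

(* inverse of mxvec_index: splits an index of C^(m*n) = C^m (x) C^n *)
Definition pidx (m n : nat) (k : 'I_(m * n)) : 'I_m * 'I_n :=
  enum_val (cast_ord (esym (mxvec_cast m n)) k).

Definition kron (m1 n1 m2 n2 : nat) (A : 'M[C]_(m1, n1)) (B : 'M[C]_(m2, n2))
  : 'M[C]_(m1 * m2, n1 * n2) :=
  \matrix_(i, j) (A (pidx i).1 (pidx j).1 * B (pidx i).2 (pidx j).2).

Definition adjm (m n : nat) (A : 'M[C]_(m, n)) : 'M[C]_(n, m) :=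
  (map_mx Num.conj A)^T.

Definition psd (n : nat) (A : 'M[C]_n) : Prop :=
  forall v : 'cV[C]_n, 0 <= (adjm v *m A *m v) 0 0.

Definition expval (n : nat) (A : 'M[C]_n) (u : 'cV[C]_n) : C :=
  (adjm u *m A *m u) 0 0.

(* POVM with outcomes 0,1,2 (conclusive) and 3 (= "?") on C^2 (x) C^2 *)
Definition is_POVM (P : 'I_4 -> 'M[C]_(2 * 2)) : Prop :=
  (forall i, psd (P i)) /\ \sum_(i < 4) P i = 1%:M.

Definition s_vec (i : 'I_3) : 'cV[C]_2 :=
  if val i == 0%N then \col_(k < 2) (if val k == 0%N then 1 else 0)
  else if val i == 1%N then
    \col_(k < 2) (if val k == 0%N then - 2^-1 else - (sqrtC (3 : C)) / 2)
  else
    \col_(k < 2) (if val k == 0%N then - 2^-1 else (sqrtC (3 : C)) / 2).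

Definition psi (i : 'I_3) : 'cV[C]_(2 * 2) := kron (s_vec i) (s_vec i).

Definition unambiguous (P : 'I_4 -> 'M[C]_(2 * 2)) : Prop :=
  forall (i j : 'I_3), i != j -> expval (P (widen_ord (leqnSn 3) i)) (psi j) = 0.

Definition success (P : 'I_4 -> 'M[C]_(2 * 2)) : C :=
  3^-1 * \sum_(i < 3) expval (P (widen_ord (leqnSn 3) i)) (psi i).

Definition sep_elem (A : 'M[C]_(2 * 2)) : Prop :=
  exists (N : nat) (c : 'I_N -> C) (a b : 'I_N -> 'cV[C]_2),
    (forall k, 0 <= c k) /\
    (forall k, adjm (a k) *m a k = 1%:M /\ adjm (b k) *m b k = 1%:M) /\
    A = \sum_(k < N) c k *: kron (a k *m adjm (a k)) (b k *m adjm (b k)).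

Definition is_sep_POVM (P : 'I_4 -> 'M[C]_(2 * 2)) : Prop :=
  is_POVM P /\ forall i, sep_elem (P i).

(* The state space is C^dA (x) C^dB; at a node
   one party (A or B) applies a local instrument with Kraus operators
   K j : C^d -> C^(d' j) (output dimension may change, allowing ancillas and
   discarding), the outcome j is broadcast and the protocol continues with
   the subprotocol ch j. *)
Inductive locc : nat -> nat -> Type :=
| LLeaf : forall dA dB, 'I_4 -> locc dA dB
| LNodeA : forall dA dB (m : nat) (d : 'I_m -> nat),
    (forall j, 'M[C]_(d j, dA)) -> (forall j, locc (d j) dB) -> locc dA dB
| LNodeB : forall dA dB (m : nat) (d : 'I_m -> nat),
    (forall j, 'M[C]_(d j, dB)) -> (forall j, locc dA (d j)) -> locc dA dB.

Fixpoint locc_wf dA dB (p : locc dA dB) : Prop :=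
  match p with
  | LLeaf _ _ _ => True
  | LNodeA dA dB m d K ch =>
      \sum_(j < m) adjm (K j) *m K j = 1%:M /\ forall j, locc_wf (ch j)
  | LNodeB dA dB m d K ch =>
      \sum_(j < m) adjm (K j) *m K j = 1%:M /\ forall j, locc_wf (ch j)
  end.

Fixpoint locc_eff dA dB (p : locc dA dB) (o : 'I_4) : 'M[C]_(dA * dB) :=
  match p with
  | LLeaf dA dB l => if l == o then 1%:M else 0
  | LNodeA dA dB m d K ch =>
      \sum_(j < m) (adjm (kron (K j) (1%:M : 'M[C]_dB))
                    *m locc_eff (ch j) o *m kron (K j) (1%:M : 'M[C]_dB))
  | LNodeB dA dB m d K ch =>
      \sum_(j < m) (adjm (kron (1%:M : 'M[C]_dA) (K j))
                    *m locc_eff (ch j) o *m kron (1%:M : 'M[C]_dA) (K j))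
  end.

Definition is_LOCC_POVM (P : 'I_4 -> 'M[C]_(2 * 2)) : Prop :=
  exists p : locc 2 2, locc_wf p /\ forall o, P o = locc_eff p o.

End QDefs.

(* Global bound 3/4.  Write x_i = <psi_i|P_i|psi_i>.  For a <> b, a positive
   operator with zero expectation on a vector kills all cross terms with it,
   so every conclusive element other than P_a, P_b has zero expectation on
   psi_a - psi_b, while P_a, P_b see it as psi_a, psi_b.  Completeness gives
   x_a + x_b <= |psi_a - psi_b|^2 = 3/2, and averaging over the three pairs
   gives success <= 3/4.  It is attained by a rank-one POVM (opt_povm).

   Product bound 1/2.  Let t_k be the unit vector orthogonal to s_k.  A
   positive qubit operator with zero expectation on s_j is a multiple of
   t_j t_j^*.  So a product term A (x) B of an unambiguous element P_i is
   either zero or a multiple of t_j t_j^* (x) t_k t_k^* with {i,j,k} = {0,1,2},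
   and then 1/3 <psi_i|A (x) B|psi_i> <= 1/4 <sigma|A (x) B|sigma>, sigma being
   the (unnormalised) singlet, |sigma|^2 = 2.  Summing over the conclusive
   elements bounds the success by 1/2 for every POVM whose elements are sums
   of tensor products of positive operators: separable POVMs and, by
   induction on the protocol, LOCC POVMs.  The bound is attained by the LOCC
   protocol where both parties measure the trine {2/3 t_k t_k^*}: two distinct
   exclusions identify the state (trine_povm, trine_protocol). *)

From HB Require Import structures.
From mathcomp Require Import all_boot all_order all_algebra.
From mathcomp Require Import ring.
Import Order.TTheory GRing.Theory Num.Theory.
Local Open Scope ring_scope.
Set Implicit Arguments. Unset Strict Implicit. Unset Printing Implicit Defensive.

Ltac case_I3 i := case: i => [[|[|[|//]]] ?].
Ltac case_I2 i := case: i => [[|[|//]] ?].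

Lemma pidxK m n (i : 'I_m) (j : 'I_n) : pidx (mxvec_index i j) = (i, j).
Proof. by rewrite /pidx /mxvec_index cast_ordK enum_rankK. Qed.

Lemma pidx11 (k : 'I_(1 * 1)) : pidx k = (0, 0).
Proof. by case: (pidx k) => x y; rewrite [x]ord1 [y]ord1. Qed.

Lemma pidx_inj m n : injective (@pidx m n).
Proof. by move=> i j /enum_val_inj /cast_ord_inj. Qed.

Lemma sum_pidx (V : nmodType) m n (F : 'I_m * 'I_n -> V) :
  \sum_(k < m * n) F (pidx k) = \sum_(i < m) \sum_(j < n) F (i, j).
Proof.
rewrite (reindex _ (curry_mxvec_bij m n)) /= pair_big /=.
by apply: eq_bigr => -[i j] _; rewrite pidxK.
Qed.

Notation outer v := (v *m adjm v).

Section TensorAlgebra.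
Variable C : numClosedFieldType.

Lemma mxDE m n (M N : 'M[C]_(m, n)) a b : (M + N) a b = M a b + N a b.
Proof. by rewrite mxE. Qed.

Lemma mxBE m n (M N : 'M[C]_(m, n)) a b : (M - N) a b = M a b - N a b.
Proof. by rewrite !mxE. Qed.

Lemma mxZE m n c (M : 'M[C]_(m, n)) a b : (c *: M) a b = c * M a b.
Proof. by rewrite mxE. Qed.

Lemma mx11 (P Q : 'M[C]_1) : (P *m Q) 0 0 = P 0 0 * Q 0 0.
Proof. by rewrite mxE big_ord1. Qed.

Lemma kron_mul m1 n1 p1 m2 n2 p2 (A : 'M[C]_(m1, n1)) (B : 'M[C]_(m2, n2))
  (A' : 'M[C]_(n1, p1)) (B' : 'M[C]_(n2, p2)) :
  kron A B *m kron A' B' = kron (A *m A') (B *m B').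
Proof.
apply/matrixP => i j; rewrite !mxE.
set F := (fun p : 'I_n1 * 'I_n2 => A (pidx i).1 p.1 * B (pidx i).2 p.2 *
   (A' p.1 (pidx j).1 * B' p.2 (pidx j).2)).
rewrite (eq_bigr (fun k => F (pidx k))); last by move=> k _; rewrite !mxE.
rewrite sum_pidx /F big_distrl /=; apply: eq_bigr => a _.
by rewrite big_distrr /=; apply: eq_bigr => b _; rewrite mulrACA.
Qed.

Lemma kron11 m n : kron (1%:M : 'M[C]_m) (1%:M : 'M[C]_n) = 1%:M.
Proof.
apply/matrixP => i j; rewrite !mxE.
have [->|ne] := eqVneq i j; first by rewrite !eqxx mulr1.
case: (eqVneq (pidx i).1 (pidx j).1) => e1; rewrite ?mul0r //.
case: (eqVneq (pidx i).2 (pidx j).2) => e2; rewrite ?mulr0 //.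
have E : pidx i = pidx j.
  by move: e1 e2; case: (pidx i) (pidx j) => ? ? [? ?] /= -> ->.
by move: ne; rewrite (pidx_inj E) eqxx.
Qed.

Lemma kron1x1E (X Y : 'M[C]_1) : (kron X Y) 0 0 = X 0 0 * Y 0 0.
Proof. by rewrite mxE !pidx11. Qed.

Lemma kron0l m1 n1 m2 n2 (B : 'M[C]_(m2, n2)) : kron (0 : 'M[C]_(m1, n1)) B = 0.
Proof. by apply/matrixP => i j; rewrite !mxE mul0r. Qed.

Lemma kron0r m1 n1 m2 n2 (A : 'M[C]_(m1, n1)) : kron A (0 : 'M[C]_(m2, n2)) = 0.
Proof. by apply/matrixP => i j; rewrite !mxE mulr0. Qed.

Lemma kronDl m1 n1 m2 n2 (A A' : 'M[C]_(m1, n1)) (B : 'M[C]_(m2, n2)) :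
  kron (A + A') B = kron A B + kron A' B.
Proof. by apply/matrixP => i j; rewrite !mxE mulrDl. Qed.

Lemma kronDr m1 n1 m2 n2 (A : 'M[C]_(m1, n1)) (B B' : 'M[C]_(m2, n2)) :
  kron A (B + B') = kron A B + kron A B'.
Proof. by apply/matrixP => i j; rewrite !mxE mulrDr. Qed.

Lemma kronZl m1 n1 m2 n2 c (A : 'M[C]_(m1, n1)) (B : 'M[C]_(m2, n2)) :
  kron (c *: A) B = c *: kron A B.
Proof. by apply/matrixP => i j; rewrite !mxE mulrA. Qed.

Lemma kronZr m1 n1 m2 n2 c (A : 'M[C]_(m1, n1)) (B : 'M[C]_(m2, n2)) :
  kron A (c *: B) = c *: kron A B.
Proof. by apply/matrixP => i j; rewrite !mxE mulrCA. Qed.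

Lemma kron_suml m1 n1 m2 n2 I (r : seq I) (P : pred I) (F : I -> 'M[C]_(m1, n1))
  (B : 'M[C]_(m2, n2)) :
  kron (\sum_(i <- r | P i) F i) B = \sum_(i <- r | P i) kron (F i) B.
Proof.
elim/big_rec2: _ => [|i x y _ <-]; first exact: kron0l.
by rewrite kronDl.
Qed.

Lemma kron_sumr m1 n1 m2 n2 I (r : seq I) (P : pred I) (A : 'M[C]_(m1, n1))
  (F : I -> 'M[C]_(m2, n2)) :
  kron A (\sum_(i <- r | P i) F i) = \sum_(i <- r | P i) kron A (F i).
Proof.
elim/big_rec2: _ => [|i x y _ <-]; first exact: kron0r.
by rewrite kronDr.
Qed.

Lemma adjm_mul m n p (A : 'M[C]_(m, n)) (B : 'M[C]_(n, p)) :
  adjm (A *m B) = adjm B *m adjm A.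
Proof. by rewrite /adjm map_mxM trmx_mul. Qed.

Lemma adjmK m n (A : 'M[C]_(m, n)) : adjm (adjm A) = A.
Proof. by apply/matrixP => i j; rewrite !mxE conjCK. Qed.

Lemma adjmD m n (A B : 'M[C]_(m, n)) : adjm (A + B) = adjm A + adjm B.
Proof. by apply/matrixP => i j; rewrite !mxE rmorphD. Qed.

Lemma adjmB m n (A B : 'M[C]_(m, n)) : adjm (A - B) = adjm A - adjm B.
Proof. by apply/matrixP => i j; rewrite !mxE rmorphB. Qed.

Lemma adjmZ m n c (A : 'M[C]_(m, n)) : adjm (c *: A) = c^* *: adjm A.
Proof. by apply/matrixP => i j; rewrite !mxE rmorphM. Qed.

Lemma adjm1 n : adjm (1%:M : 'M[C]_n) = 1%:M.
Proof. by apply/matrixP => i j; rewrite !mxE rmorphMn rmorph1 eq_sym. Qed.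

Lemma adjm_kron m1 n1 m2 n2 (A : 'M[C]_(m1, n1)) (B : 'M[C]_(m2, n2)) :
  adjm (kron A B) = kron (adjm A) (adjm B).
Proof. by apply/matrixP => i j; rewrite !mxE rmorphM. Qed.

Lemma adjm_delta n (i : 'I_n) : adjm (delta_mx i 0 : 'cV[C]_n) = delta_mx 0 i.
Proof.
apply/matrixP => a b; rewrite !mxE [a]ord1 eqxx andbT.
by case: (b == i); rewrite ?rmorph1 ?rmorph0.
Qed.

Lemma adjm00 m (X : 'M[C]_(1, m)) (Y : 'M[C]_(m, 1)) :
  (adjm Y *m adjm X) 0 0 = ((X *m Y) 0 0)^*.
Proof. by rewrite -adjm_mul !mxE. Qed.

End TensorAlgebra.

Section InnerProduct.
Variable C : numClosedFieldType.

Definition inner n (u v : 'cV[C]_n) : C := (adjm u *m v) 0 0.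
Definition sqnorm (x : C) : C := x^* * x.

Lemma sqnorm_ge0 (x : C) : 0 <= sqnorm x.
Proof. by rewrite /sqnorm mulrC mul_conjC_ge0. Qed.

Lemma inner_conj n (v w : 'cV[C]_n) : inner v w = (inner w v)^*.
Proof. by rewrite /inner -adjm00 adjmK. Qed.

Lemma innerBl n (u v w : 'cV[C]_n) : inner (v - w) u = inner v u - inner w u.
Proof. by rewrite /inner adjmB mulmxBl mxBE. Qed.

Lemma innerBr n (u v w : 'cV[C]_n) : inner u (v - w) = inner u v - inner u w.
Proof. by rewrite /inner mulmxBr mxBE. Qed.

Lemma inner_kron m n (a c : 'cV[C]_m) (b d : 'cV[C]_n) :
  inner (kron a b) (kron c d) = inner a c * inner b d.
Proof.
rewrite /inner (_ : adjm (kron a b) = kron (adjm a) (adjm b)); last exact: adjm_kron.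
rewrite -kron1x1E; congr (fun_of_matrix _ 0 0); exact (kron_mul (adjm a) (adjm b) c d).
Qed.

Lemma expval1 n (u : 'cV[C]_n) : expval 1%:M u = inner u u.
Proof. by rewrite /expval mulmx1. Qed.

Lemma expvalD n (A B : 'M[C]_n) u : expval (A + B) u = expval A u + expval B u.
Proof. by rewrite /expval mulmxDr mulmxDl mxE. Qed.

Lemma expvalZ n c (A : 'M[C]_n) u : expval (c *: A) u = c * expval A u.
Proof. by rewrite /expval -scalemxAr -scalemxAl mxE. Qed.

Lemma expval0 n (u : 'cV[C]_n) : expval 0 u = 0.
Proof. by rewrite /expval mulmx0 mul0mx mxE. Qed.

Lemma expval_sum n I (r : seq I) (P : pred I) (F : I -> 'M[C]_n) u :
  expval (\sum_(i <- r | P i) F i) u = \sum_(i <- r | P i) expval (F i) u.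
Proof.
elim/big_rec2: _ => [|i x y _ <-]; first exact: expval0.
by rewrite expvalD.
Qed.

Lemma expval_kron m n (A : 'M[C]_m) (B : 'M[C]_n) (u : 'cV[C]_m) (v : 'cV[C]_n) :
  expval (kron A B) (kron u v) = expval A u * expval B v.
Proof.
rewrite /expval (_ : adjm (kron u v) = kron (adjm u) (adjm v)); last exact: adjm_kron.
rewrite -kron1x1E; congr (fun_of_matrix _ 0 0).
exact: (etrans (congr1 (mulmx^~ (kron u v)) (kron_mul (adjm u) (adjm v) A B))
  (kron_mul _ _ u v)).
Qed.

Lemma expval_rank1 n c (w v : 'cV[C]_n) :
  expval (c *: outer w) v = c * sqnorm (inner w v).
Proof.
rewrite /expval -scalemxAr -scalemxAl mxZE !mulmxA.
by rewrite -[_ *m adjm w *m v]mulmxA mx11 -/(inner v w) -/(inner w v) inner_conj.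
Qed.

Lemma expvalB n (P : 'M[C]_n) u v : expval P (u - v) =
  expval P u - (adjm u *m P *m v) 0 0 - (adjm v *m P *m u) 0 0 + expval P v.
Proof.
rewrite /expval adjmB !mulmxBl !mulmxBr !mxBE.
by rewrite opprB addrA addrAC (addrAC _ _ (- _)).
Qed.

Lemma kron_rank1 m n (a : 'cV[C]_m) (b : 'cV[C]_n) :
  kron (outer a) (outer b) = outer (kron a b).
Proof.
rewrite (_ : adjm (kron a b) = kron (adjm a) (adjm b)); last exact: adjm_kron.
exact: (esym (kron_mul a b (adjm a) (adjm b))).
Qed.

End InnerProduct.

Section Positivity.
Variable C : numClosedFieldType.

Lemma psd0 n : psd (0 : 'M[C]_n).
Proof. by move=> v; rewrite mulmx0 mul0mx mxE. Qed.

Lemma psd1 n : psd (1%:M : 'M[C]_n).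
Proof.
move=> v; rewrite mulmx1 mxE; apply: sumr_ge0 => k _.
by rewrite !mxE mulrC mul_conjC_ge0.
Qed.

Lemma psd_rank1 n c (w : 'cV[C]_n) : 0 <= c -> psd (c *: outer w).
Proof.
move=> c0 v; have := expval_rank1 c w v; rewrite /expval => ->.
by rewrite mulr_ge0 ?sqnorm_ge0.
Qed.

Lemma psdD n (A B : 'M[C]_n) : psd A -> psd B -> psd (A + B).
Proof. by move=> hA hB v; rewrite mulmxDr mulmxDl mxE addr_ge0. Qed.

Lemma psd_sum n I (r : seq I) (P : pred I) (F : I -> 'M[C]_n) :
  (forall i, P i -> psd (F i)) -> psd (\sum_(i <- r | P i) F i).
Proof.
move=> h; elim/big_rec: _ => [|i x Pi hx]; first exact: psd0.
exact: psdD (h _ Pi) hx.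
Qed.

Lemma psd_congr n m (A : 'M[C]_n) (K : 'M[C]_(n, m)) :
  psd A -> psd (adjm K *m A *m K).
Proof. by move=> hA v; have := hA (K *m v); rewrite adjm_mul !mulmxA. Qed.

Lemma real_affine_ge0_eq0 (c z : C) : 0 <= c ->
  (forall s, s \is Num.real -> 0 <= c + s * z) -> z = 0.
Proof.
move=> c0 h.
have zr : z \is Num.real.
  have := h 1 (rpred1 _); rewrite mul1r => /ger0_real cz.
  by rewrite -(addKr c z) rpredD // rpredN ger0_real.
apply/eqP; apply: contraT => nz.
have sr : (- (c + 1) / z) \is Num.real.
  by rewrite rpredM ?rpredN ?rpredV // rpredD ?ger0_real.
have := h _ sr; rewrite divfK // opprD addrA subrr add0r.
by rewrite oppr_ge0 ler10.
Qed.

(* If <u|A|u> = 0 for a positive A, then every cross term <w|A|u>, <u|A|w>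
   vanishes (polarisation of the positive form v |-> <v|A|v>). *)
Lemma psd_cross_eq0 n (A : 'M[C]_n) (u w : 'cV[C]_n) : psd A -> expval A u = 0 ->
  (adjm w *m A *m u) 0 0 = 0 /\ (adjm u *m A *m w) 0 0 = 0.
Proof.
move=> hA e0.
set c := (adjm w *m A *m w) 0 0.
set x := (adjm w *m A *m u) 0 0.
set y := (adjm u *m A *m w) 0 0.
have form t : 0 <= c + t * x + t^* * y.
  have := hA (w + t *: u).
  rewrite adjmD adjmZ !mulmxDl !mulmxDr -!scalemxAl -!scalemxAr !mxDE !mxZE.
  by rewrite -/c -/x -/y -/(expval A u) e0 !mulr0 addr0.
have c0 : 0 <= c by have := form 0; rewrite rmorph0 !mul0r !addr0.
have sum0 : x + y = 0.
  apply: (real_affine_ge0_eq0 c0) => s sr.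
  by have := form s; rewrite conj_Creal // -addrA -mulrDr.
have diff0 : 'i * (x - y) = 0.
  apply: (real_affine_ge0_eq0 c0) => s sr.
  have := form ('i * s); rewrite rmorphM /= conjCi conj_Creal // -addrA.
  by have -> : 'i * s * x + - 'i * s * y = s * ('i * (x - y)) by ring.
have xy : x = y.
  by move/eqP: diff0; rewrite mulf_eq0 (negPf (neq0Ci _)) subr_eq0 => /eqP.
have : x + x = 0 by rewrite {2}xy.
rewrite -mulr2n -mulr_natr => /eqP; rewrite mulf_eq0 pnatr_eq0 orbF => /eqP x0.
by split; [|rewrite -xy].
Qed.

Lemma psd_annihilates n (A : 'M[C]_n) (u : 'cV[C]_n) : psd A -> expval A u = 0 ->
  A *m u = 0 /\ adjm u *m A = 0.
Proof.
move=> hA hu; split; apply/matrixP => i j; rewrite [RHS]mxE.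
- have [h _] := psd_cross_eq0 (delta_mx i 0) hA hu.
  by rewrite [j]ord1 -h adjm_delta -mulmxA -rowE [RHS]mxE.
- have [_ h] := psd_cross_eq0 (delta_mx j 0) hA hu.
  by rewrite [i]ord1 -h -colE [RHS]mxE.
Qed.

Lemma psd_rank1_of_kernel n (A : 'M[C]_n) (u v : 'cV[C]_n) :
  outer u + outer v = 1%:M -> psd A -> expval A u = 0 ->
  A = expval A v *: outer v.
Proof.
move=> basis hA hu; have [Au uA] := psd_annihilates hA hu.
have Av : A = A *m v *m adjm v.
  by rewrite -{1}[A]mulmx1 -basis mulmxDr !mulmxA Au mul0mx add0r.
rewrite {1}Av -{1}[A]mul1mx -basis !mulmxDl -!mulmxA.
rewrite (mulmxA (adjm u) A) uA !mul0mx mulmx0 add0r.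
rewrite (mulmxA A) (mulmxA (adjm v)) (mulmxA (adjm v)).
by rewrite (mx11_scalar (adjm v *m A *m v)) mul_scalar_mx -scalemxAr.
Qed.

End Positivity.

Section QubitGeometry.
Variable C : numClosedFieldType.

Definition qubit (a b : C) : 'cV[C]_2 :=
  \col_(k < 2) (if val k == 0%N then a else b).
Definition ket0 : 'cV[C]_2 := qubit 1 0.
Definition ket1 : 'cV[C]_2 := qubit 0 1.

Lemma sum_I2 (F : 'I_2 -> C) : \sum_(k < 2) F k = F 0 + F 1.
Proof. by rewrite big_ord_recl big_ord1; congr (_ + F _); apply: val_inj. Qed.

Lemma inner_qubit a b c d : inner (qubit a b) (qubit c d) = a^* * c + b^* * d.
Proof. by rewrite /inner mxE sum_I2 !mxE. Qed.

Lemma rank1E n (u v : 'cV[C]_n) a b : (u *m adjm v) a b = u a 0 * (v b 0)^*.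
Proof. by rewrite !mxE big_ord1 !mxE. Qed.

Definition sqrt3 : C := sqrtC 3.

Lemma sqrt3_sq : sqrt3 ^+ 2 = 3.
Proof. exact: sqrtCK. Qed.

Lemma sqrt3_conj : sqrt3^* = sqrt3.
Proof. by apply: geC0_conj; rewrite sqrtC_ge0 ler0n. Qed.

Lemma s_vec_qubit (i : 'I_3) : s_vec C i = if val i == 0%N then qubit 1 0
  else if val i == 1%N then qubit (- 2^-1) (- sqrt3 / 2)
  else qubit (- 2^-1) (sqrt3 / 2).
Proof. by []. Qed.

(* t_k: the unit vector orthogonal to the trine state s_k. *)
Definition trine_perp (k : 'I_3) : 'cV[C]_2 :=
  if val k == 0%N then qubit 0 1
  else if val k == 1%N then qubit (sqrt3 / 2) (- 2^-1)
  else qubit (sqrt3 / 2) (2^-1).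

End QubitGeometry.

Ltac conj_simpl := rewrite ?(rmorphM, rmorphN, rmorphD, rmorphB, fmorphV,
  rmorph_nat, rmorph1, rmorph0) /= ?sqrt3_conj.

Section TrineIdentities.
Variable C : numClosedFieldType.
Local Notation t := (@trine_perp C).
Local Notation s := (s_vec C).

Lemma inner_trine (i j : 'I_3) : inner (s i) (s j) = if i == j then 1 else - 2^-1.
Proof.
by case_I3 i; case_I3 j; rewrite !s_vec_qubit /= inner_qubit; conj_simpl;
  field: (sqrt3_sq C).
Qed.

Lemma trine_perp_overlap (k j : 'I_3) :
  sqnorm (inner (t k) (s j)) = if k == j then 0 else 3 / 4.
Proof.
by rewrite /sqnorm; case_I3 k; case_I3 j; rewrite !s_vec_qubit /trine_perp /=
  inner_qubit; conj_simpl; field: (sqrt3_sq C).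
Qed.

Lemma trine_perp_unit (k : 'I_3) : adjm (t k) *m t k = 1%:M.
Proof.
apply/matrixP => a b; rewrite [a]ord1 [b]ord1 -/(inner (t k) (t k)) mxE /=.
by rewrite /trine_perp; case_I3 k; rewrite /= inner_qubit; conj_simpl;
  field: (sqrt3_sq C).
Qed.

Lemma trine_basis (j : 'I_3) : outer (s j) + outer (t j) = 1%:M.
Proof.
apply/matrixP => a b; rewrite mxDE !rank1E /trine_perp !s_vec_qubit.
by case_I3 j; case_I2 a; case_I2 b; rewrite /= !mxE /=; conj_simpl;
  field: (sqrt3_sq C).
Qed.

Lemma trine_resolution : \sum_(k < 3) (2 / 3) *: outer (t k) = 1%:M.
Proof.
apply/matrixP => a b; rewrite summxE !big_ord_recl big_ord0 !mxZE !rank1E.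
by rewrite /trine_perp /=; case_I2 a; case_I2 b; rewrite /= !mxE /=; conj_simpl;
  field: (sqrt3_sq C).
Qed.

Lemma trine_singlet_identity (i j k : 'I_3) : i != j -> j != k -> i != k ->
  3^-1 * (sqnorm (inner (t j) (s i)) * sqnorm (inner (t k) (s i))) =
  4^-1 * sqnorm (inner (t j) (ket0 C) * inner (t k) (ket1 C)
                 - inner (t j) (ket1 C) * inner (t k) (ket0 C)).
Proof.
rewrite /sqnorm /ket0 /ket1 /trine_perp; case_I3 i; case_I3 j; case_I3 k;
  move=> //= _ _ _; rewrite !s_vec_qubit /= !inner_qubit; conj_simpl;
  by field: (sqrt3_sq C).
Qed.

End TrineIdentities.

Section ProductBound.
Variable C : numClosedFieldType.
Local Notation t := (@trine_perp C).
Local Notation s := (s_vec C).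

Definition singlet : 'cV[C]_(2 * 2) := kron (ket0 C) (ket1 C) - kron (ket1 C) (ket0 C).

Lemma inner_singlet (a b : 'cV[C]_2) : inner (kron a b) singlet =
  inner a (ket0 C) * inner b (ket1 C) - inner a (ket1 C) * inner b (ket0 C).
Proof. by rewrite /singlet innerBr !inner_kron. Qed.

Lemma singlet_norm : inner singlet singlet = 2.
Proof. by rewrite /singlet !innerBl !innerBr !inner_kron /ket0 /ket1 !inner_qubit; conj_simpl; ring. Qed.

Lemma psd_trine_kernel (A : 'M[C]_2) (j : 'I_3) : psd A -> expval A (s j) = 0 ->
  A = expval A (t j) *: outer (t j).
Proof. exact: psd_rank1_of_kernel (trine_basis C j). Qed.

Lemma psd_trine_kernel2 (A : 'M[C]_2) (j k : 'I_3) : j != k -> psd A ->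
  expval A (s j) = 0 -> expval A (s k) = 0 -> A = 0.
Proof.
move=> jk hA Aj; rewrite (psd_trine_kernel hA Aj) expval_rank1 trine_perp_overlap.
rewrite (negPf jk) => /eqP; rewrite mulf_eq0 mulf_eq0 invr_eq0 !pnatr_eq0 !orbF.
by move/eqP => ->; rewrite scale0r.
Qed.

Lemma trine_product_singlet (i j k : 'I_3) (a b : C) :
  i != j -> j != k -> i != k ->
  3^-1 * (expval (a *: outer (t j)) (s i) * expval (b *: outer (t k)) (s i)) =
  4^-1 * expval (kron (a *: outer (t j)) (b *: outer (t k))) singlet.
Proof.
move=> ij jk ik; rewrite !expval_rank1 kronZl kronZr scalerA kron_rank1.
rewrite expval_rank1 inner_singlet [RHS]mulrCA.
by rewrite -(trine_singlet_identity C ij jk ik); ring.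
Qed.

Lemma product_term_bound (A B : 'M[C]_2) (i j k : 'I_3) :
  i != j -> j != k -> i != k -> psd A -> psd B ->
  expval A (s j) * expval B (s j) = 0 ->
  expval A (s k) * expval B (s k) = 0 ->
  3^-1 * (expval A (s i) * expval B (s i)) <= 4^-1 * expval (kron A B) singlet.
Proof.
move=> ij jk ik hA hB /eqP; rewrite mulf_eq0 => /orP[/eqP Aj|/eqP Bj] /eqP;
  rewrite mulf_eq0 => /orP[/eqP Ak|/eqP Bk].
- by rewrite (psd_trine_kernel2 jk hA Aj Ak) kron0l !expval0 mul0r !mulr0.
- rewrite (psd_trine_kernel hA Aj) (psd_trine_kernel hB Bk).
  by rewrite trine_product_singlet.
- rewrite eq_sym in jk; rewrite (psd_trine_kernel hA Ak) (psd_trine_kernel hB Bj).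
  by rewrite trine_product_singlet.
- by rewrite (psd_trine_kernel2 jk hB Bj Bk) kron0r !expval0 !mulr0.
Qed.

End ProductBound.

Notation conclusive P i := (P (widen_ord (leqnSn 3) i)).

Section SumsOfProducts.
Variable C : numClosedFieldType.

Definition sum_of_products dA dB (M : 'M[C]_(dA * dB)) : Prop :=
  exists s : seq ('M[C]_dA * 'M[C]_dB),
    (forall x, x \in s -> psd x.1 /\ psd x.2) /\ M = \sum_(x <- s) kron x.1 x.2.

Lemma sum_seq_eq0 (T : eqType) (s : seq T) (F : T -> C) :
  (forall x, x \in s -> 0 <= F x) -> \sum_(x <- s) F x = 0 ->
  forall x, x \in s -> F x = 0.
Proof.
move=> F0; rewrite big_seq_cond => /eqP; rewrite psumr_eq0 => [/allP h x xs|x].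
  by have := h x xs; rewrite xs => /eqP.
by case/andP => xs _; apply: F0.
Qed.

Lemma other_indices (i : 'I_3) : exists j k : 'I_3, [/\ i != j, j != k & i != k].
Proof.
case_I3 i.
- by exists (@Ordinal 3 1 isT), (@Ordinal 3 2 isT).
- by exists (@Ordinal 3 0 isT), (@Ordinal 3 2 isT).
- by exists (@Ordinal 3 0 isT), (@Ordinal 3 1 isT).
Qed.

Lemma conclusive_product_bound (P : 'I_4 -> 'M[C]_(2 * 2)) (i : 'I_3) :
  (forall o, psd (P o)) -> unambiguous P ->
  sum_of_products (conclusive P i) ->
  3^-1 * expval (conclusive P i) (psi C i)
    <= 4^-1 * expval (conclusive P i) (singlet C).
Proof.
move=> Ppsd Pu [s [hs Es]]; have [j [k [ij jk ik]]] := other_indices i.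
have term_zero l : i != l -> forall x, x \in s ->
    expval x.1 (s_vec C l) * expval x.2 (s_vec C l) = 0.
  move=> il; apply: sum_seq_eq0.
    by move=> x /hs [hA hB]; apply: mulr_ge0; [exact: hA | exact: hB].
  rewrite -[RHS](Pu i l il) Es expval_sum.
  by apply: eq_bigr => x _; rewrite /psi expval_kron.
rewrite Es !expval_sum !big_distrr /= big_seq [X in _ <= X]big_seq.
apply: ler_sum => x xs; have [hA hB] := hs x xs.
rewrite /psi expval_kron.
exact: product_term_bound ij jk ik hA hB (term_zero j ij x xs) (term_zero k ik x xs).
Qed.

(* A POVM whose conclusive elements are sums of products has success at most
   1/2: summing the previous bound, the conclusive elements see at most the
   norm |sigma|^2 = 2 of the singlet. *)
Lemma success_products_le_half (P : 'I_4 -> 'M[C]_(2 * 2)) :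
  is_POVM P -> unambiguous P ->
  (forall i : 'I_3, sum_of_products (conclusive P i)) ->
  success P <= 1 / 2.
Proof.
move=> [Ppsd Psum] Pu Pprod.
have total : \sum_(i < 3) expval (conclusive P i) (singlet C)
    = 2 - expval (P ord_max) (singlet C).
  apply/eqP; rewrite eq_sym subr_eq -expval_sum -expvalD -big_ord_recr Psum.
  by rewrite expval1 singlet_norm.
rewrite /success big_distrr /=.
apply: le_trans (ler_sum _ (fun i _ => conclusive_product_bound Ppsd Pu (Pprod i))) _.
rewrite -big_distrr /= total (_ : 1 / 2 = 4^-1 * 2); last by field.
by rewrite ler_wpM2l ?invr_ge0 ?ler0n // gerBl; apply: Ppsd.
Qed.

End SumsOfProducts.

Section SeparableAndLOCC.
Variable C : numClosedFieldType.

Lemma sep_elem_sum_of_products (M : 'M[C]_(2 * 2)) : sep_elem M -> sum_of_products M.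
Proof.
move=> [N [c [a [b [c0 [_ ->]]]]]].
exists [seq (c k *: outer (a k), outer (b k)) | k <- index_enum 'I_N]; split.
  move=> x /mapP [k _ ->] /=; split; first exact: psd_rank1.
  by rewrite -[outer (b k)]scale1r; apply: psd_rank1; rewrite ler01.
by rewrite big_map; apply: eq_bigr => k _; rewrite kronZl.
Qed.

Fixpoint locc_terms dA dB (p : locc C dA dB) (o : 'I_4) {struct p} :
  seq ('M[C]_dA * 'M[C]_dB) :=
  match p in locc _ a b return seq ('M[C]_a * 'M[C]_b) with
  | LLeaf _ _ l => if l == o then [:: (1%:M, 1%:M)] else [::]
  | LNodeA _ _ m d K ch =>
      flatten [seq [seq (adjm (K j) *m x.1 *m K j, x.2) | x <- locc_terms (ch j) o]
              | j <- index_enum 'I_m]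
  | LNodeB _ _ m d K ch =>
      flatten [seq [seq (x.1, adjm (K j) *m x.2 *m K j) | x <- locc_terms (ch j) o]
              | j <- index_enum 'I_m]
  end.

Lemma locc_terms_spec dA dB (p : locc C dA dB) o :
  locc_eff p o = \sum_(x <- locc_terms p o) kron x.1 x.2 /\
  (forall x, x \in locc_terms p o -> psd x.1 /\ psd x.2).
Proof.
elim: p => [a b l|a b m d K ch IH|a b m d K ch IH] /=.
- case: eqP => _; last by rewrite big_nil.
  rewrite big_cons big_nil addr0 kron11; split => // x; rewrite inE => /eqP -> /=.
  by split; apply: psd1.
- split.
    rewrite big_flatten big_map /=; apply: eq_bigr => j _.
    rewrite (IH j).1 mulmx_sumr mulmx_suml big_map; apply: eq_bigr => x _ /=.
    by rewrite adjm_kron adjm1 !kron_mul mul1mx mulmx1.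
  move=> x /flattenP [xs /mapP [j _ ->] /mapP [y yin ->]] /=.
  by have [h1 h2] := (IH j).2 y yin; split => //; exact: psd_congr.
- split.
    rewrite big_flatten big_map /=; apply: eq_bigr => j _.
    rewrite (IH j).1 mulmx_sumr mulmx_suml big_map; apply: eq_bigr => x _ /=.
    by rewrite adjm_kron adjm1 !kron_mul mul1mx mulmx1.
  move=> x /flattenP [xs /mapP [j _ ->] /mapP [y yin ->]] /=.
  by have [h1 h2] := (IH j).2 y yin; split => //; exact: psd_congr.
Qed.

Lemma locc_eff_sum_of_products dA dB (p : locc C dA dB) o :
  sum_of_products (locc_eff p o).
Proof. by have [E H] := locc_terms_spec p o; exists (locc_terms p o). Qed.

Lemma locc_eff_psd dA dB (p : locc C dA dB) o : psd (locc_eff p o).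
Proof.
elim: p => [a b l|a b m d K ch IH|a b m d K ch IH] /=.
- by case: eqP => _; [apply: psd1 | apply: psd0].
- by apply: psd_sum => j _; apply: psd_congr.
- by apply: psd_sum => j _; apply: psd_congr.
Qed.

Lemma locc_eff_complete dA dB (p : locc C dA dB) : locc_wf p ->
  \sum_(o < 4) locc_eff p o = 1%:M.
Proof.
elim: p => [a b l|a b m d K ch IH|a b m d K ch IH] /=.
- move=> _; rewrite (bigD1 l) //= eqxx big1 ?addr0 // => o ol.
  by rewrite eq_sym (negPf ol).
- move=> [hK hch]; rewrite exchange_big /=.
  rewrite (eq_bigr (fun j => kron (adjm (K j) *m K j) (1%:M : 'M[C]_b))).
    by rewrite -kron_suml hK kron11.
  move=> j _; rewrite -mulmx_suml -mulmx_sumr (IH j (hch j)) mulmx1.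
  by rewrite adjm_kron adjm1 kron_mul mulmx1.
- move=> [hK hch]; rewrite exchange_big /=.
  rewrite (eq_bigr (fun j => kron (1%:M : 'M[C]_a) (adjm (K j) *m K j))).
    by rewrite -kron_sumr hK kron11.
  move=> j _; rewrite -mulmx_suml -mulmx_sumr (IH j (hch j)) mulmx1.
  by rewrite adjm_kron adjm1 kron_mul mulmx1.
Qed.

Lemma LOCC_POVM_products (P : 'I_4 -> 'M[C]_(2 * 2)) : is_LOCC_POVM P ->
  is_POVM P /\ forall o, sum_of_products (P o).
Proof.
move=> [p [wf hP]]; split; last by move=> o; rewrite hP; exact: locc_eff_sum_of_products.
split; first by move=> o; rewrite hP; exact: locc_eff_psd.
by rewrite (eq_bigr _ (fun o _ => hP o)) locc_eff_complete.
Qed.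

End SeparableAndLOCC.

Section GlobalBound.
Variable C : numClosedFieldType.

Lemma inner_psi (a b : 'I_3) : inner (psi C a) (psi C b) = if a == b then 1 else 4^-1.
Proof. by rewrite /psi inner_kron inner_trine; case: eqP => _; [rewrite mulr1 | field]. Qed.

(* An unambiguous element P_c sees psi_a - psi_b exactly as it sees the one
   of psi_a, psi_b with index c (and as zero if c is neither): all cross terms
   vanish since P_c has zero expectation on the other state. *)
Lemma expval_psi_diff (P : 'I_4 -> 'M[C]_(2 * 2)) (a b c : 'I_3) :
  (forall o, psd (P o)) -> unambiguous P -> a != b ->
  expval (conclusive P c) (psi C a - psi C b) =
    (if c == a then expval (conclusive P c) (psi C a) else 0) +
    (if c == b then expval (conclusive P c) (psi C b) else 0).
Proof.
move=> Ppsd Pu ab; rewrite expvalB.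
have [ca|ca] := eqVneq c a; have [cb|cb] := eqVneq c b.
- by move: ab; rewrite -ca -cb eqxx.
- have z := Pu c b cb; have [x1 x2] := psd_cross_eq0 (psi C a) (Ppsd _) z.
  by rewrite z x1 x2 !subr0 addr0.
- have z := Pu c a ca; have [x1 x2] := psd_cross_eq0 (psi C b) (Ppsd _) z.
  by rewrite z x1 x2 !subr0.
- have za := Pu c a ca; have zb := Pu c b cb.
  have [x1 x2] := psd_cross_eq0 (psi C b) (Ppsd _) za.
  by rewrite za zb x1 x2 !subr0 addr0.
Qed.

(* Two conclusive probabilities sum to at most |psi_a - psi_b|^2 = 3/2. *)
Lemma pair_success_le (P : 'I_4 -> 'M[C]_(2 * 2)) : is_POVM P -> unambiguous P ->
  forall a b : 'I_3, a != b ->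
  expval (conclusive P a) (psi C a) + expval (conclusive P b) (psi C b) <= 3 / 2.
Proof.
move=> [Ppsd Psum] Pu a b ab; set phi := psi C a - psi C b.
have total : \sum_(c < 3) expval (conclusive P c) phi + expval (P ord_max) phi = 3 / 2.
  rewrite -expval_sum -expvalD -big_ord_recr Psum expval1 /phi.
  rewrite !innerBl !innerBr !inner_psi !eqxx (negPf ab) eq_sym (negPf ab).
  by field.
rewrite (eq_bigr _ (fun c _ => expval_psi_diff c Ppsd Pu ab)) big_split /= in total.
rewrite -!big_mkcond !big_pred1_eq in total.
by rewrite -total lerDl; apply: Ppsd.
Qed.

(* Averaging over the three pairs: success <= 3/4 for every POVM. *)
Lemma success_le_three_quarters (P : 'I_4 -> 'M[C]_(2 * 2)) :
  is_POVM P -> unambiguous P -> success P <= 3 / 4.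
Proof.
move=> hP hu; have h := pair_success_le hP hu.
rewrite /success !big_ord_recl big_ord0 addr0.
have h01 := h ord0 (lift ord0 ord0) isT.
have h12 := h (lift ord0 ord0) (lift ord0 (lift ord0 ord0)) isT.
have h02 := h ord0 (lift ord0 (lift ord0 ord0)) isT.
set x := expval _ (psi C ord0) in h01 h02 *.
set y := expval _ (psi C (lift ord0 ord0)) in h01 h12 *.
set z := expval _ (psi C (lift ord0 (lift ord0 ord0))) in h12 h02 *.
have S := lerD (lerD h01 h12) h02.
rewrite (_ : 3^-1 * (x + (y + z)) = 6^-1 * ((x + y) + (y + z) + (x + z))); last by field.
rewrite (_ : 3 / 4 = 6^-1 * (3 / 2 + 3 / 2 + 3 / 2)); last by field.
by rewrite ler_wpM2l // invr_ge0 ler0n.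
Qed.

End GlobalBound.

Section TrineProtocol.
Variable C : numClosedFieldType.
Local Notation t := (@trine_perp C).

(* Both parties measure the trine POVM {2/3 t_k t_k^*}; outcome k excludes the
   state s_k.  Distinct exclusions k, l identify the state 3 - k - l; equal
   ones give the inconclusive outcome 3. *)
Definition exclusion_label (k l : 'I_3) : nat := if k == l then 3%N else (3 - k - l)%N.

Lemma exclusion_label_lt (k l : 'I_3) : (exclusion_label k l < 4)%N.
Proof.
rewrite /exclusion_label; case: (k == l) => //.
by apply: leq_ltn_trans (leq_subr _ _) _; apply: leq_ltn_trans (leq_subr _ _) _.
Qed.

Lemma exclusion_label_excludes (i j k l : 'I_3) :
  i != j -> exclusion_label k l = i -> (k == j) || (l == j).
Proof.
by rewrite /exclusion_label; case_I3 i; case_I3 j; case_I3 k; case_I3 l;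
  rewrite -?val_eqE /= => // ? /eqP.
Qed.

Definition trine_povm (o : 'I_4) : 'M[C]_(2 * 2) :=
  \sum_(k < 3) \sum_(l < 3)
    (if exclusion_label k l == val o then 4 / 9 else 0) *: kron (outer (t k)) (outer (t l)).

Lemma trine_povm_psd o : psd (trine_povm o).
Proof.
apply: psd_sum => k _; apply: psd_sum => l _; rewrite kron_rank1.
by apply: psd_rank1; case: ifP => _ //; rewrite divr_ge0 ?ler0n.
Qed.

Lemma sum_indicator (m : nat) (c : C) : (m < 4)%N ->
  \sum_(o < 4) (if m == val o then c else 0) = c.
Proof.
move=> h; rewrite (bigD1 (Ordinal h)) //= eqxx big1 ?addr0 // => o.
by rewrite -val_eqE /= eq_sym => /negPf ->.
Qed.

(* Completeness: the product of two trine resolutions of the identity. *)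
Lemma trine_povm_complete : \sum_(o < 4) trine_povm o = 1%:M.
Proof.
rewrite /trine_povm exchange_big /=.
rewrite (eq_bigr (fun k => \sum_(l < 3) (4 / 9) *: kron (outer (t k)) (outer (t l)))).
  rewrite -(kron11 C 2 2) -(trine_resolution C) kron_suml; apply: eq_bigr => k _.
  rewrite kron_sumr; apply: eq_bigr => l _.
  by rewrite kronZl kronZr scalerA; congr (_ *: _); field.
move=> k _; rewrite exchange_big /=; apply: eq_bigr => l _.
by rewrite -scaler_suml sum_indicator // exclusion_label_lt.
Qed.

Lemma trine_povm_sep o : sep_elem (trine_povm o).
Proof.
exists (3 * 3)%N,
  (fun n => if exclusion_label (pidx n).1 (pidx n).2 == val o then 4 / 9 else 0),
  (fun n => t (pidx n).1), (fun n => t (pidx n).2).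
split; first by move=> n; case: ifP => _ //; rewrite divr_ge0 ?ler0n.
split; first by move=> n; rewrite !trine_perp_unit.
by rewrite (sum_pidx (fun p => (if exclusion_label p.1 p.2 == val o then 4 / 9 else 0) *:
   kron (outer (t p.1)) (outer (t p.2)))).
Qed.

Lemma expval_trine_povm o (j : 'I_3) : expval (trine_povm o) (psi C j) =
  \sum_(k < 3) \sum_(l < 3) (if exclusion_label k l == val o then 4 / 9 else 0) *
     ((if k == j then 0 else 3 / 4) * (if l == j then 0 else 3 / 4)).
Proof.
rewrite expval_sum; apply: eq_bigr => k _; rewrite expval_sum; apply: eq_bigr => l _.
rewrite expvalZ /psi expval_kron -[outer (t k)]scale1r -[outer (t l)]scale1r.
by rewrite !expval_rank1 !mul1r !trine_perp_overlap.
Qed.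

Lemma trine_povm_unambiguous : unambiguous trine_povm.
Proof.
move=> i j ij; rewrite expval_trine_povm big1 // => k _; rewrite big1 // => l _.
case: eqP => [/= h|]; last by rewrite mul0r.
by case/orP: (exclusion_label_excludes ij h) => /eqP ->; rewrite eqxx ?mul0r ?mulr0.
Qed.

Lemma trine_povm_success : success trine_povm = 1 / 2.
Proof.
rewrite /success (eq_bigr (fun _ => 1 / 2)) => [|i _]; last first.
  by rewrite expval_trine_povm /= !big_ord_recl !big_ord0 !addr0 /exclusion_label;
    case_I3 i; rewrite /=; field.
by rewrite sumr_const card_ord -mulr_natr; field.
Qed.

Definition trine_kraus (k : 'I_3) : 'M[C]_(1, 2) := sqrtC (2 / 3) *: adjm (t k).

Lemma trine_kraus_effect k : adjm (trine_kraus k) *m trine_kraus k = (2 / 3) *: outer (t k).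
Proof.
have r : (sqrtC (2 / 3 : C))^* * sqrtC (2 / 3) = 2 / 3.
  by rewrite geC0_conj ?sqrtC_ge0 ?divr_ge0 ?ler0n // -expr2 sqrtCK.
by rewrite /trine_kraus adjmZ adjmK -scalemxAr -scalemxAl scalerA mulrC r.
Qed.

Lemma trine_kraus_complete : \sum_(k < 3) adjm (trine_kraus k) *m trine_kraus k = 1%:M.
Proof. by rewrite -(trine_resolution C); apply: eq_bigr => k _; rewrite trine_kraus_effect. Qed.

Definition trine_protocol : locc C 2 2 :=
  @LNodeA C 2 2 3 (fun _ => 1%N) trine_kraus
    (fun k => @LNodeB C 1 2 3 (fun _ => 1%N) trine_kraus
       (fun l => @LLeaf C 1 1 (Ordinal (exclusion_label_lt k l)))).

Lemma trine_protocol_wf : locc_wf trine_protocol.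
Proof.
split; first exact: trine_kraus_complete.
by move=> k; split; [exact: trine_kraus_complete | by []].
Qed.

Lemma trine_protocol_eff o : locc_eff trine_protocol o = trine_povm o.
Proof.
rewrite /= /trine_povm; apply: eq_bigr => k _.
rewrite mulmx_sumr mulmx_suml; apply: eq_bigr => l _.
have leaf : (if Ordinal (exclusion_label_lt k l) == o then 1%:M else 0 : 'M[C]_(1 * 1)) =
    (if exclusion_label k l == val o then 1 else 0) *: kron (1%:M : 'M[C]_1) 1%:M.
  by rewrite -val_eqE /=; case: ifP => _; rewrite ?scale1r ?scale0r ?kron11.
rewrite leaf -!scalemxAr -!scalemxAl -!scalemxAr !adjm_kron !adjm1 !kron_mul.
rewrite !mul1mx !mulmx1 !trine_kraus_effect -scalemxAl kron_mul mulmx1.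
rewrite trine_kraus_effect kronZl kronZr !scalerA; congr (_ *: _).
by case: ifP => _; field.
Qed.

Lemma trine_povm_LOCC : is_LOCC_POVM trine_povm.
Proof.
exists trine_protocol; split; first exact: trine_protocol_wf.
by move=> o; rewrite trine_protocol_eff.
Qed.

End TrineProtocol.

Section OptimalPOVM.
Variable C : numClosedFieldType.
Local Notation sqrt3 := (@sqrt3 C).

(* Vectors of C^2 (x) C^2 given by their coordinates in the basis e_a (x) e_b. *)
Definition table2 (x00 x01 x10 x11 : C) (a b : 'I_2) : C :=
  if val a == 0%N then (if val b == 0%N then x00 else x01)
  else (if val b == 0%N then x10 else x11).

Definition vec4 (f : 'I_2 -> 'I_2 -> C) : 'cV[C]_(2 * 2) :=
  \col_k f (pidx k).1 (pidx k).2.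

Lemma vec4E f a b : vec4 f (mxvec_index a b) 0 = f a b.
Proof. by rewrite mxE pidxK. Qed.

Lemma mxvec_index_eq (a b c d : 'I_2) :
  (mxvec_index a b == mxvec_index c d) = (a == c) && (b == d).
Proof.
apply/eqP/andP => [h|[/eqP-> /eqP->]] //.
by have := congr1 (@pidx 2 2) h; rewrite !pidxK => -[-> ->].
Qed.

Lemma matrix4P (M N : 'M[C]_(2 * 2)) :
  (forall a b c d : 'I_2, M (mxvec_index a b) (mxvec_index c d) =
                         N (mxvec_index a b) (mxvec_index c d)) -> M = N.
Proof.
move=> h; apply/matrixP => i j.
by case/mxvec_indexP: i => a b; case/mxvec_indexP: j => c d; exact: h.
Qed.

Lemma inner_vec4_psi f (j : 'I_3) : inner (vec4 f) (psi C j) =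
  \sum_(a < 2) \sum_(b < 2) (f a b)^* * (s_vec C j a 0 * s_vec C j b 0).
Proof.
rewrite /inner mxE.
pose F := fun p : 'I_2 * 'I_2 => (f p.1 p.2)^* * (s_vec C j p.1 0 * s_vec C j p.2 0).
transitivity (\sum_(k < 2 * 2) F (pidx k)); last exact: sum_pidx.
by apply: eq_bigr => k _; rewrite /F !mxE pidx11.
Qed.

(* w_i lies in the symmetric subspace, is orthogonal to psi_j for j <> i and
   has <w_i|psi_i> = 3. *)
Definition opt_vec (i : nat) : 'cV[C]_(2 * 2) :=
  if i == 0%N then vec4 (table2 3 0 0 (-1))
  else if i == 1%N then vec4 (table2 0 sqrt3 sqrt3 2)
  else vec4 (table2 0 (- sqrt3) (- sqrt3) 2).

Definition bell_plus : 'cV[C]_(2 * 2) := vec4 (table2 1 0 0 1).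
Definition bell_minus : 'cV[C]_(2 * 2) := vec4 (table2 0 1 (-1) 0).

Lemma inner_opt_vec (i j : 'I_3) :
  inner (opt_vec i) (psi C j) = if i == j then 3 else 0.
Proof.
rewrite /opt_vec; case_I3 i; case_I3 j; rewrite /= inner_vec4_psi !sum_I2 /table2
  !s_vec_qubit /= !mxE /=; conj_simpl; by field: (sqrt3_sq C).
Qed.

Definition opt_povm (o : 'I_4) : 'M[C]_(2 * 2) :=
  if val o == 3%N then (1 / 4) *: outer bell_plus + (1 / 2) *: outer bell_minus
  else (1 / 12) *: outer (opt_vec o).

Lemma opt_povm_psd o : psd (opt_povm o).
Proof.
rewrite /opt_povm; case: ifP => _.
  by apply: psdD; apply: psd_rank1; rewrite divr_ge0 ?ler0n.
by apply: psd_rank1; rewrite divr_ge0 ?ler0n.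
Qed.

Lemma opt_povm_complete : \sum_(o < 4) opt_povm o = 1%:M.
Proof.
rewrite !big_ord_recl big_ord0 addr0 /opt_povm /=.
apply: matrix4P => a b c d.
rewrite !mxDE !mxZE !rank1E /opt_vec /= /bell_plus /bell_minus !vec4E mxE mxvec_index_eq.
by case_I2 a; case_I2 b; case_I2 c; case_I2 d; rewrite /table2 /=; conj_simpl;
  field: (sqrt3_sq C).
Qed.

Lemma opt_povm_conclusive (i : 'I_3) :
  conclusive opt_povm i = (1 / 12) *: outer (opt_vec i).
Proof. by rewrite /opt_povm /=; case_I3 i. Qed.

Lemma opt_povm_unambiguous : unambiguous opt_povm.
Proof.
move=> i j ij; rewrite opt_povm_conclusive expval_rank1 inner_opt_vec (negPf ij).
by rewrite /sqnorm !mulr0.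
Qed.

Lemma opt_povm_success : success opt_povm = 3 / 4.
Proof.
rewrite /success (eq_bigr (fun _ => 3 / 4)) => [|i _].
  by rewrite sumr_const card_ord -mulr_natr; field.
by rewrite opt_povm_conclusive expval_rank1 inner_opt_vec eqxx /sqnorm; conj_simpl; field.
Qed.

End OptimalPOVM.

Theorem mainTheorem17 (C : numClosedFieldType) :
  ((exists P : 'I_4 -> 'M[C]_(2 * 2),
      is_POVM P /\ unambiguous P /\ success P = 3 / 4) /\
   (forall P : 'I_4 -> 'M[C]_(2 * 2),
      is_POVM P -> unambiguous P -> success P <= 3 / 4)) /\
  ((exists P : 'I_4 -> 'M[C]_(2 * 2),
      is_sep_POVM P /\ unambiguous P /\ success P = 1 / 2) /\
   (forall P : 'I_4 -> 'M[C]_(2 * 2),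
      is_sep_POVM P -> unambiguous P -> success P <= 1 / 2)) /\
  ((exists P : 'I_4 -> 'M[C]_(2 * 2),
      is_LOCC_POVM P /\ unambiguous P /\ success P = 1 / 2) /\
   (forall P : 'I_4 -> 'M[C]_(2 * 2),
      is_LOCC_POVM P -> unambiguous P -> success P <= 1 / 2)).
Proof.
have trine_sep : is_sep_POVM (@trine_povm C).
  by split; [split; [exact: trine_povm_psd | exact: trine_povm_complete] |
             exact: trine_povm_sep].
split; [split|split; split].
- exists (@opt_povm C); split; first by split; [exact: opt_povm_psd | exact: opt_povm_complete].
  by split; [exact: opt_povm_unambiguous | exact: opt_povm_success].
- exact: success_le_three_quarters.
- exists (@trine_povm C); split; first exact: trine_sep.
  by split; [exact: trine_povm_unambiguous | exact: trine_povm_success].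
- move=> P [hP hsep] hu; apply: success_products_le_half hP hu _ => i.
  exact: sep_elem_sum_of_products.
- exists (@trine_povm C); split; first exact: trine_povm_LOCC.
  by split; [exact: trine_povm_unambiguous | exact: trine_povm_success].
- move=> P /LOCC_POVM_products [hP hprod] hu.
  exact: success_products_le_half hP hu (fun i => hprod _).
Qed.
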